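(* Let $\mathbb{k}$ be a field, and let $\mathbb{k}^{2n} = \mathbb{k}^n_x \times \mathbb{k}^n_\xi$ have coordinates $(x,\xi) = (x_1,\dots,x_n,\xi_1,\dots,\xi_n)$. Let $X \subseteq \mathbb{k}^n_\xi$ be a subvariety. If $L$ is an $\ell \times n$ matrix with entries in $\mathbb{k}$, then the variety $\mathcal{V}(Lx\xi)$ of the bilinear forms $Lx\xi$ in $\mathbb{k}^{2n}$ is transverse to $\mathbb{k}^n \times X$ at any smooth point of $\mathbb{k}^n \times X$ whose $\xi$-coordinates are all nonzero.
   Context: Here $x\xi$ denotes the column vector $(x_1\xi_1,\dots,x_n\xi_n)^T$, and $Lx\xi$ is the vector of $\ell$ bilinear forms obtained by multiplying $L$ times $x\xi$; $\mathcal{V}(Lx\xi)\subseteq \mathbb{k}^{2n}$ is their common zero locus. Varieties are considered over the algebraic closure of $\mathbb{k}$ when needed. Two subvarieties $V,W$ of an ambient affine space are transverse at a point $p \in V\cap W$ if the (Zariski) tangent spaces $T_pV$ and $T_pW$ sum to the whole tangent space of the ambient space; the claim concerns points $p$ of $\mathbb{k}^n\times X$ (with all $\xi$-coordinates nonzero, smooth on $\mathbb{k}^n\times X$) lying in $\mathcal{V}(Lx\xi)$. *)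

From HB Require Import structures.
From mathcomp Require Import all_boot all_order all_algebra.
From mathcomp Require Import mpoly.
Set Implicit Arguments. Unset Strict Implicit. Unset Printing Implicit Defensive.
Import Order.TTheory GRing.Theory.
Local Open Scope ring_scope.

(* Points of the affine space K^m are functions 'I_m -> K; subsets of K^m are
   predicates.  K is an algebraically closed field (playing the role of the
   algebraic closure of the base field k). *)
Definition pt (K : Type) (m : nat) := 'I_m -> K.

Definition zeroset (F : fieldType) (K : closedFieldType)
  (iota : {rmorphism F -> K}) (m : nat) (S : {mpoly F[m]} -> Prop)
  : pt K m -> Prop :=
  fun z => forall g, S g -> (map_mpoly iota g).@[z] = 0.

Definition zclosed (K : closedFieldType) (m : nat) (Z : pt K m -> Prop) :=
  exists S : {mpoly K[m]} -> Prop, forall z, Z z <-> (forall f, S f -> f.@[z] = 0).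

Definition zirreducible (K : closedFieldType) (m : nat) (Z : pt K m -> Prop) :=
  [/\ zclosed Z, exists z, Z z &
      forall Z1 Z2 : pt K m -> Prop, zclosed Z1 -> zclosed Z2 ->
        (forall z, Z z -> Z1 z \/ Z2 z) ->
        (forall z, Z z -> Z1 z) \/ (forall z, Z z -> Z2 z)].

(* Zariski tangent space at p of the (reduced) variety Z: the vectors
   annihilated by the differentials at p of all polynomials vanishing on Z. *)
Definition tangent (K : closedFieldType) (m : nat) (Z : pt K m -> Prop)
  (p : pt K m) : pt K m -> Prop :=
  fun v => forall f : {mpoly K[m]}, (forall z, Z z -> f.@[z] = 0) ->
    \sum_(i < m) (mderiv i f).@[p] * v i = 0.

(* There is a chain Z_0 ⊊ Z_1 ⊊ ... ⊊ Z_d of irreducible closed subsets of Y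
   with p ∈ Z_0 ; the largest such d is the local dimension dim_p Y. *)
Definition chain_at (K : closedFieldType) (m : nat) (Y : pt K m -> Prop)
  (p : pt K m) (d : nat) :=
  exists c : nat -> pt K m -> Prop,
    [/\ forall i, (i <= d)%N -> zirreducible (c i),
        forall i, (i < d)%N -> (forall z, c i z -> c i.+1 z) /\
                               (exists z, c i.+1 z /\ ~ c i z),
        forall z, c d z -> Y z
      & c 0%N p].

(* p is a smooth point of Y : dim T_p Y = dim_p Y. *)
Definition smooth_point (K : closedFieldType) (m : nat) (Y : pt K m -> Prop)
  (p : pt K m) :=
  Y p /\
  exists d : nat, [/\ chain_at Y p d, ~ chain_at Y p d.+1 &
    exists B : 'M[K]_(d, m), row_free B /\
      forall v : pt K m, tangent Y p v <-> (\row_i v i <= B)%MS].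

Definition transverse_at (K : closedFieldType) (m : nat)
  (V W : pt K m -> Prop) (p : pt K m) :=
  forall w : pt K m, exists a b : pt K m,
    [/\ tangent V p a, tangent W p b & forall i, w i = a i + b i].

Definition xcoord (n : nat) (j : 'I_n) : 'I_(n + n) := lshift n j.
Definition xicoord (n : nat) (j : 'I_n) : 'I_(n + n) := rshift n j.

Definition bilin_forms (F : fieldType) (l n : nat) (L : 'M[F]_(l, n)) (i : 'I_l)
  : {mpoly F[n + n]} :=
  \sum_(j < n) (L i j)%:MP * 'X_(xcoord j) * 'X_(xicoord j).

Definition bilin_set (F : fieldType) (l n : nat) (L : 'M[F]_(l, n))
  : {mpoly F[n + n]} -> Prop :=
  fun g => exists i, g = bilin_forms L i.

Definition prod_full (K : closedFieldType) (n : nat) (X : pt K n -> Prop)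
  : pt K (n + n) -> Prop :=
  fun z => X (fun j => z (xicoord j)).

From HB Require Import structures.
From mathcomp Require Import all_boot all_order all_algebra.
From mathcomp Require Import mpoly.
From mathcomp Require Import ring.
Set Implicit Arguments.
Unset Strict Implicit.
Unset Printing Implicit Defensive.
Import GRing.Theory.
Local Open Scope ring_scope.

(* The bilinear forms [L x xi] are invariant under each torus action
   [x_j |-> x_j / s, xi_j |-> xi_j * s]; differentiating along these orbits shows
   that [xi_j e_{xi_j} - x_j e_{x_j}] is tangent to [V(L x xi)] at [p]. Since all
   [xi_j] are nonzero, these vectors together with the [x]-directions span
   [K^(2n)], and the [x]-directions are tangent to the cylinder [K^n × X]. *)

Lemma poly_eq0_of_roots_off0 (K : closedFieldType) (Q : {poly K}) :
  (forall s, s != 0 -> Q.[s] = 0) -> Q = 0.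
Proof.
move=> Qoff0; apply/eqP/negPn/negP => Qn0.
(* a root [r] of [X Q + 1] is nonzero, so [Q.[r] = 0], which is absurd *)
have : size ('X * Q + 1) != 1%N.
  by rewrite size_polyDl mulrC size_mulX // ?eqSS ?size_poly1 ?ltnS ?lt0n size_poly_eq0.
move/closed_rootP=> [r]; rewrite /root !hornerE => /eqP r_root.
have r_neq0 : r != 0.
  by apply: contraPneq r_root => ->; rewrite mul0r add0r; apply/eqP; rewrite oner_eq0.
by move: r_root; rewrite Qoff0 // mulr0 add0r => /eqP; rewrite oner_eq0.
Qed.

Section ClosedFieldDerivatives.
Variables (K : closedFieldType) (m : nat).
Implicit Types (f : {mpoly K[m]}) (p : pt K m).

Definition pt_set p i (t : K) : pt K m := fun j => if j == i then t else p j.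

Definition torus p i1 i2 (s : K) : pt K m :=
  fun j => if j == i1 then p j / s else if j == i2 then p j * s else p j.

Lemma prod_mnmBU p i (mm : 'X_{1..m}) :
  \prod_j p j ^+ (mm - U_(i))%MM j = p i ^+ (mm i).-1 * \prod_(j | j != i) p j ^+ mm j.
Proof.
rewrite (bigD1 i) //= mnmBE mnm1E eqxx subn1; congr (_ * _).
by apply: eq_bigr => j ji; rewrite mnmBE mnm1E eq_sym (negbTE ji) subn0.
Qed.

Lemma meval_mderiv f p i :
  (mderiv i f).@[p] =
    \sum_(mm <- msupp f) (mm i)%:R * f@_mm * \prod_j p j ^+ (mm - U_(i))%MM j.
Proof. by rewrite /mderiv raddf_sum; apply: eq_bigr => mm _ /=; rewrite mevalZ mevalX. Qed.

Lemma meval_mderiv_mulr f p i :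
  (mderiv i f).@[p] * p i = \sum_(mm <- msupp f) (mm i)%:R * (f@_mm * \prod_j p j ^+ mm j).
Proof.
rewrite meval_mderiv mulr_suml; apply: eq_bigr => mm _.
rewrite prod_mnmBU [in RHS](bigD1 i) //=.
by case: (mm i) => [|k]; rewrite ?mul0r //= exprS; ring.
Qed.

Lemma mderiv_eq0_of_line f p i :
  (forall t, f.@[pt_set p i t] = 0) -> (mderiv i f).@[p] = 0.
Proof.
move=> f_line.
pose P (mm : 'X_{1..m}) := \prod_(j | j != i) p j ^+ mm j.
pose Q : {poly K} := \sum_(mm <- msupp f) (f@_mm * P mm) *: 'X^(mm i).
have Q_line t : Q.[t] = f.@[pt_set p i t].
  rewrite mevalE horner_sum; apply: eq_bigr => mm _.
  rewrite hornerZ hornerXn (bigD1 i) //= /pt_set eqxx.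
  by rewrite (eq_bigr (fun j => p j ^+ mm j)) => [|j /negbTE ->] //; rewrite /P; ring.
have Q0 : Q = 0 by apply: poly_eq0_of_roots_off0 => s _; rewrite Q_line.
have : (Q^`()).[p i] = 0 by rewrite Q0 deriv0 horner0.
rewrite raddf_sum horner_sum meval_mderiv => dQ0; apply: etrans dQ0; apply: eq_bigr => mm _ /=.
by rewrite derivZ derivXn hornerZ hornerMn hornerXn prod_mnmBU -mulr_natl /P; ring.
Qed.

Lemma prod_torus p i1 i2 s (mm : 'X_{1..m}) : i1 != i2 -> s != 0 ->
  (\prod_j torus p i1 i2 s j ^+ mm j) * s ^+ mm i1 = (\prod_j p j ^+ mm j) * s ^+ mm i2.
Proof.
move=> i12 s_neq0; have i21 : i2 != i1 by rewrite eq_sym.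
rewrite (bigD1 i1) //= (bigD1 i2) //= [in RHS](bigD1 i1) //= [in RHS](bigD1 i2) //=.
rewrite /torus eqxx (negbTE i21) eqxx.
have -> : \prod_(j | (j != i1) && (j != i2)) (if j == i1 then p j / s
      else if j == i2 then p j * s else p j) ^+ mm j
    = \prod_(j | (j != i1) && (j != i2)) p j ^+ mm j.
  by apply: eq_bigr => j /andP[/negbTE -> /negbTE ->].
rewrite !exprMn exprVn.
have sm_neq0 : s ^+ mm i1 != 0 by rewrite expf_neq0.
by move: (s ^+ mm i1) sm_neq0 (\prod_(j | _) _) => b b_neq0 P; field.
Qed.

Lemma msupp_le_msize f (mm : 'X_{1..m}) i : mm \in msupp f -> (mm i <= msize f)%N.
Proof.
move/msize_mdeg_lt; rewrite mdegE (bigD1 i) //=.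
by move/ltnW; apply: leq_trans; apply: leq_addr.
Qed.

(* The exponent shift by [msize f] clears the negative powers of [s]
   (see [horner_torus_poly]). *)
Definition torus_poly f p i1 i2 : {poly K} :=
  \sum_(mm <- msupp f) (f@_mm * \prod_j p j ^+ mm j) *: 'X^(mm i2 + msize f - mm i1).

Lemma horner_torus_poly f p i1 i2 s : i1 != i2 -> s != 0 ->
  (torus_poly f p i1 i2).[s] = s ^+ msize f * f.@[torus p i1 i2 s].
Proof.
move=> i12 s_neq0; rewrite mevalE horner_sum mulr_sumr !big_seq.
apply: eq_bigr => mm /msupp_le_msize le_mmD.
rewrite hornerZ hornerXn -addnBA // exprD -{2}(subnK (le_mmD i1)) exprD.
have := prod_torus p mm i12 s_neq0.
move: (\prod_j p j ^+ mm j) (\prod_j torus p i1 i2 s j ^+ mm j) => P Ps.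
move: (s ^+ mm i1) (s ^+ mm i2) (s ^+ (msize f - mm i1)) (f@_mm) => a b c e PsP.
by transitivity (c * e * (Ps * a)); [rewrite PsP | ]; ring.
Qed.

(* Differentiate [s |-> f.@[torus p i1 i2 s]] at [s = 1]. *)
Lemma mderiv_euler_torus f p i1 i2 : i1 != i2 ->
  (forall s, s != 0 -> f.@[torus p i1 i2 s] = 0) ->
  (mderiv i2 f).@[p] * p i2 = (mderiv i1 f).@[p] * p i1.
Proof.
move=> i12 f_orbit.
pose E (mm : 'X_{1..m}) := f@_mm * \prod_j p j ^+ mm j.
have Q0 : torus_poly f p i1 i2 = 0.
  by apply: poly_eq0_of_roots_off0 => s s0; rewrite horner_torus_poly // f_orbit // mulr0.
have sumE0 : \sum_(mm <- msupp f) E mm = 0.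
  have := congr1 (horner^~ 1) Q0; rewrite horner0 horner_sum => Q1; rewrite -[RHS]Q1.
  by apply: eq_bigr => mm _; rewrite hornerZ hornerXn expr1n mulr1.
have dQ1 : \sum_(mm <- msupp f) ((mm i2)%:R - (mm i1)%:R + (msize f)%:R) * E mm = 0.
  have := congr1 (fun q : {poly K} => (q^`()).[1]) Q0.
  rewrite /= deriv0 horner0 raddf_sum horner_sum => dQ; rewrite -[RHS]dQ !big_seq.
  apply: eq_bigr => mm /msupp_le_msize le_mmD /=.
  rewrite derivZ derivXn hornerZ hornerMn hornerXn expr1n -addnBA // natrD natrB //.
  by rewrite -mulr_natr /E; ring.
rewrite !meval_mderiv_mulr; apply/eqP; rewrite -subr_eq0 -sumrB; apply/eqP.
transitivity (\sum_(mm <- msupp f) ((mm i2)%:R - (mm i1)%:R + (msize f)%:R) * E mm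
              - (msize f)%:R * \sum_(mm <- msupp f) E mm).
  by rewrite mulr_sumr -sumrB; apply: eq_bigr => mm _; rewrite /E; ring.
by rewrite dQ1 sumE0 mulr0 subr0.
Qed.

End ClosedFieldDerivatives.

Section ProductCoordinates.
Variables (K : closedFieldType) (n : nat).
Implicit Types (u v : pt K n) (p w : pt K (n + n)).

Definition pt_pair u v : pt K (n + n) :=
  fun i => match split i with inl j => u j | inr j => v j end.

Lemma pt_pair_x u v j : pt_pair u v (xcoord j) = u j.
Proof. by rewrite /pt_pair /xcoord (unsplitK (inl _ j)). Qed.

Lemma pt_pair_xi u v j : pt_pair u v (xicoord j) = v j.
Proof. by rewrite /pt_pair /xicoord (unsplitK (inr _ j)). Qed.

Lemma pt_pair_coords w i :
  w i = pt_pair (fun j => w (xcoord j)) (fun j => w (xicoord j)) i.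
Proof. by rewrite /pt_pair; case: splitP => j /= ij; congr w; apply: val_inj. Qed.

Lemma sum_pt_pair (g : 'I_(n + n) -> K) u v :
  \sum_i g i * pt_pair u v i =
    \sum_j g (xcoord j) * u j + \sum_j g (xicoord j) * v j.
Proof.
by rewrite big_split_ord; congr (_ + _); apply: eq_bigr => j _;
  rewrite ?pt_pair_x ?pt_pair_xi.
Qed.

(* [k^n × X] is a union of lines parallel to the [x]-axes. *)
Lemma tangent_prod_full (F : fieldType) (iota : {rmorphism F -> K})
    (S : {mpoly F[n]} -> Prop) p u :
  prod_full (zeroset iota S) p ->
  tangent (prod_full (zeroset iota S)) p (pt_pair u (fun=> 0)).
Proof.
move=> Yp f f_Y; rewrite sum_pt_pair [X in _ + X]big1 ?addr0 => [|j _]; last by rewrite mulr0.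
apply: big1 => j _; rewrite mderiv_eq0_of_line ?mul0r // => t; apply: f_Y => g Sg.
by rewrite -(Yp g Sg); apply: meval_eq => k; rewrite /pt_set eq_rlshift.
Qed.

Lemma meval_bilin_forms (F : fieldType) (iota : {rmorphism F -> K}) l
    (L : 'M[F]_(l, n)) i p :
  (map_mpoly iota (bilin_forms L i)).@[p] =
    \sum_j iota (L i j) * p (xcoord j) * p (xicoord j).
Proof.
rewrite /bilin_forms (raddf_sum (map_mpoly iota)) raddf_sum; apply: eq_bigr => j _ /=.
by rewrite !rmorphM /= map_mpolyC !map_mpolyX mevalC !mevalXU.
Qed.

Lemma zeroset_bilin_torus (F : fieldType) (iota : {rmorphism F -> K}) l
    (L : 'M[F]_(l, n)) p j s : s != 0 ->
  zeroset iota (bilin_set L) p ->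
  zeroset iota (bilin_set L) (torus p (xcoord j) (xicoord j) s).
Proof.
move=> s_neq0 Vp _ [i ->]; rewrite -(Vp _ (ex_intro _ i erefl)) !meval_bilin_forms.
apply: eq_bigr => k _; rewrite /torus /xcoord /xicoord !eq_shift.
by case: eqVneq => [->|] //=; field.
Qed.

(* A combination of the velocities at [p] of the torus orbits, which stay in [V]. *)
Lemma tangent_zeroset_bilin (F : fieldType) (iota : {rmorphism F -> K}) l
    (L : 'M[F]_(l, n)) p (c : pt K n) :
  zeroset iota (bilin_set L) p ->
  tangent (zeroset iota (bilin_set L)) p
    (pt_pair (fun j => - (c j * p (xcoord j))) (fun j => c j * p (xicoord j))).
Proof.
move=> Vp f f_V; rewrite sum_pt_pair -big_split /=; apply: big1 => j _.
set dx := (mderiv (xcoord j) f).@[p]; set dxi := (mderiv (xicoord j) f).@[p].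
have euler : dxi * p (xicoord j) = dx * p (xcoord j).
  apply: mderiv_euler_torus; first by rewrite /xcoord /xicoord eq_lrshift.
  by move=> s s_neq0; apply/f_V/zeroset_bilin_torus.
transitivity (c j * (dxi * p (xicoord j) - dx * p (xcoord j))); first by ring.
by rewrite euler subrr mulr0.
Qed.

End ProductCoordinates.

Theorem lemma1p1 (F : fieldType) (K : closedFieldType)
  (iota : {rmorphism F -> K}) (n l : nat)
  (S : {mpoly F[n]} -> Prop) (L : 'M[F]_(l, n)) (p : pt K (n + n)) :
  let X := zeroset iota S in
  let V := zeroset iota (bilin_set L) in
  let Y := prod_full X in
  smooth_point Y p ->
  (forall j : 'I_n, p (xicoord j) != 0) ->
  V p ->
  transverse_at V Y p.
Proof.
move=> X V Y [Yp _] p_xi_neq0 Vp w.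
pose c j := w (xicoord j) / p (xicoord j).
exists (pt_pair (fun j => - (c j * p (xcoord j))) (fun j => c j * p (xicoord j))).
exists (pt_pair (fun j => w (xcoord j) + c j * p (xcoord j)) (fun=> 0)).
split; [exact: tangent_zeroset_bilin | exact: tangent_prod_full |].
move=> i; rewrite pt_pair_coords /pt_pair; case: (split i) => j; first by ring.
by rewrite /c addr0 divfK.
Qed.
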